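(* Let $f=\frac1{1-X}\in GF(2)[[X]]$, $\mu[f]:g\mapsto fg$, and let $\Gamma$ be the group of bijections of $GF(2)[[X]]$ generated by the maps $g\mapsto f\cdot(s+g)$, $s\in\{0,1\}$. Then the cyclic subgroup $\langle\mu[f]\rangle$ is not a normal subgroup of $\Gamma$.
   Context: Under the identification of $\{0,1\}^\omega$ with $GF(2)[[X]]$ via $(a_k)\mapsto\sum a_kX^k$, $\Gamma$ is the automaton group $\Gamma(\mathcal{M}_2)$ of the two-state Mealy machine over $\{0,1\}$ in which state $s$, reading $r$, outputs $s+r\bmod 2$ and moves to state $s+r\bmod 2$. *)

From Stdlib Require Import Bool Arith ZArith.

(* GF(2)[[X]] is represented by coefficient sequences: g k = coefficient of X^k. *)
Definition PS := nat -> bool.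

Definition ps_add (g h : PS) : PS := fun k => xorb (g k) (h k).

Definition ps_const (s : bool) : PS := fun k => match k with 0 => s | _ => false end.

Fixpoint xsum (n : nat) (F : nat -> bool) : bool :=
  match n with 0 => false | S n' => xorb (xsum n' F) (F n') end.
Definition ps_mul (g h : PS) : PS := fun k => xsum (S k) (fun i => andb (g i) (h (k - i))).

(* f = 1/(1-X) = sum_k X^k, and 1 - X = 1 + X over GF(2) *)
Definition f_ser : PS := fun _ => true.
Definition one_minus_X : PS := fun k => match k with 0 | 1 => true | _ => false end.

Definition mu (g : PS) : PS := ps_mul f_ser g.
Definition mu_inv (g : PS) : PS := ps_mul one_minus_X g.

Definition mu_pow (k : Z) : PS -> PS :=
  match k with
  | Z0 => fun g => g
  | Zpos p => Nat.iter (Pos.to_nat p) mu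
  | Zneg p => Nat.iter (Pos.to_nat p) mu_inv
  end.

Definition gen (s : bool) (g : PS) : PS := ps_mul f_ser (ps_add (ps_const s) g).
Definition gen_inv (s : bool) (g : PS) : PS := ps_add (mu_inv g) (ps_const s).

(* Gamma, the group of bijections generated by the gen s:
   in_Gamma h hi  means h is a finite product of the gen s and gen_inv s,
   and hi is the corresponding product of inverses (so hi = h^{-1}). *)
Inductive in_Gamma : (PS -> PS) -> (PS -> PS) -> Prop :=
| Gamma_id : in_Gamma (fun g => g) (fun g => g)
| Gamma_gen : forall s h hi, in_Gamma h hi ->
    in_Gamma (fun g => gen s (h g)) (fun g => hi (gen_inv s g))
| Gamma_gen_inv : forall s h hi, in_Gamma h hi ->
    in_Gamma (fun g => gen_inv s (h g)) (fun g => hi (gen s g)).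

Definition in_cyclic_mu (t : PS -> PS) : Prop :=
  exists m : Z, forall g, t g = mu_pow m g.

From Stdlib Require Import Bool Arith ZArith.

(* Every power of mu[f] is linear and hence fixes 0, whereas conjugating mu[f]
   by the affine generator a_1 : g |-> f (1 + g) gives a map sending 0 to
   a_1 (mu[f] (a_1^-1 0)) = a_1 f = f (1 + f) = X f^2, whose X-coefficient is 1. *)

Definition ps_zero : PS := fun _ => false.

Definition is_zero (g : PS) : Prop := forall k, g k = false.

Definition preserves_zero (F : PS -> PS) : Prop :=
  forall g, is_zero g -> is_zero (F g).

Lemma xsum_false n (F : nat -> bool) : (forall i, F i = false) -> xsum n F = false.
Proof.
  intros HF; induction n as [|n IH]; simpl; [reflexivity|].
  now rewrite IH, HF.
Qed.

Lemma ps_mul_preserves_zero g : preserves_zero (ps_mul g).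
Proof.
  intros h Hh k; unfold ps_mul; apply xsum_false; intros i.
  now rewrite Hh, andb_false_r.
Qed.

Lemma iter_preserves_zero n F : preserves_zero F -> preserves_zero (Nat.iter n F).
Proof.
  intros HF; induction n as [|n IH]; intros g Hg; simpl; [assumption|].
  now apply HF, IH.
Qed.

Lemma mu_pow_preserves_zero m : preserves_zero (mu_pow m).
Proof.
  destruct m as [|p|p]; simpl.
  - now intros g Hg.
  - apply iter_preserves_zero, ps_mul_preserves_zero.
  - apply iter_preserves_zero, ps_mul_preserves_zero.
Qed.

Lemma conj_gen_mu_zero_coef1 : gen true (mu (gen_inv true ps_zero)) 1 = true.
Proof. reflexivity. Qed.

Theorem proposition9p6 :
  exists (h hi : PS -> PS) (k : Z),
    in_Gamma h hi /\ ~ in_cyclic_mu (fun g => h (mu_pow k (hi g))).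
Proof.
  exists (fun g => gen true g), (fun g => gen_inv true g), 1%Z. split.
  - exact (Gamma_gen true _ _ Gamma_id).
  - intros [m Hm].
    assert (Hzero : is_zero (mu_pow m ps_zero))
      by now apply mu_pow_preserves_zero.
    specialize (Hzero 1); rewrite <- Hm in Hzero.
    change (gen true (mu (gen_inv true ps_zero)) 1 = false) in Hzero.
    now rewrite conj_gen_mu_zero_coef1 in Hzero.
Qed.
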